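(* Under the standing assumptions, for every $j$ with $1\le j\le n$ and every $z\in\mathbb C$, \begin{align*} \widetilde\alpha_2^{(2j+1)}(z)&=\widetilde\alpha_2^{(2j-1)}(z)-(z-a)\,\Theta_{1,j}^*(\bar z)\,\widehat K_{1,j}^{-1}\,\Gamma_{1,j}(a),\\ \widetilde\beta_2^{(2j+1)}(z)&=\widetilde\beta_2^{(2j-1)}(z)+(z-a)\,\Theta_{1,j}^*(\bar z)\,\widehat K_{1,j}^{-1}\,\Theta_{1,j}(a),\\ \widetilde\gamma_2^{(2j+1)}(z)&=\widetilde\gamma_2^{(2j-1)}(z)-(z-a)\,\Gamma_{1,j}^*(\bar z)\,\widehat K_{1,j}^{-1}\,\Gamma_{1,j}(a),\\ \widetilde\delta_2^{(2j+1)}(z)&=\widetilde\delta_2^{(2j-1)}(z)+(z-a)\,\Gamma_{1,j}^*(\bar z)\,\widehat K_{1,j}^{-1}\,\Theta_{1,j}(a). \end{align*}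
   Context: Let $q,n\in\mathbb N$ and let $a<b$ be real numbers. All matrices are complex; $I_q$, $0_q$ are the $q\times q$ identity and zero matrices; for a matrix-valued function $F$, $F^*(\bar z)$ means $(F(\bar z))^*$. Let $s_0,\dots,s_{2n+1}$ be Hermitian $q\times q$ matrices. Define $K_{1,j}:=(bs_{l+k}-s_{l+k+1})_{l,k=0}^{j}$ and assume (standing assumption) that $K_{1,n}$ is positive definite. Let $T_0:=0_q$ and, for $j\ge1$, let $T_j$ be the $(j+1)\times(j+1)$ block matrix (blocks of size $q\times q$) with $I_q$ in the block positions $(l+1,l)$, $l=0,\dots,j-1$, and $0_q$ elsewhere; $R_j(z):=(I_{(j+1)q}-zT_j)^{-1}$; $v_j:=\mathrm{col}(I_q,0_q,\dots,0_q)\in\mathbb C^{(j+1)q\times q}$. Let $\widetilde u_{1,j}:=\mathrm{col}(s_0,s_1-bs_0,\dots,s_j-bs_{j-1})\in\mathbb C^{(j+1)q\times q}$ ($\widetilde u_{1,0}=s_0$), and for $j\ge1$ let $\widetilde Y_{1,j}:=\mathrm{col}(bs_j-s_{j+1},\dots,bs_{2j-1}-s_{2j})$. Schur complements: $\widehat K_{1,0}:=bs_0-s_1$, $\widehat K_{1,j}:=bs_{2j}-s_{2j+1}-\widetilde Y_{1,j}^*K_{1,j-1}^{-1}\widetilde Y_{1,j}$ ($j\ge1$). Polynomials: $\Gamma_{1,0}:=I_q$, $\Theta_{1,0}:=s_0$, and for $j\ge1$: $\Gamma_{1,j}(z):=(-\widetilde Y_{1,j}^*K_{1,j-1}^{-1},\,I_q)R_j(z)v_j$,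 $\Theta_{1,j}(z):=(-\widetilde Y_{1,j}^*K_{1,j-1}^{-1},\,I_q)R_j(z)\widetilde u_{1,j}$. For $0\le j\le n$ the $2q\times2q$ matrix polynomial $\widetilde U_2^{(2j+1)}=\begin{pmatrix}\widetilde\alpha_2^{(2j+1)}&\widetilde\beta_2^{(2j+1)}\\ \widetilde\gamma_2^{(2j+1)}&\widetilde\delta_2^{(2j+1)}\end{pmatrix}$ is defined by $\widetilde\alpha_2^{(2j+1)}(z)=I_q-(z-a)\widetilde u_{1,j}^*R_j^*(\bar z)K_{1,j}^{-1}R_j(a)v_j$, $\widetilde\beta_2^{(2j+1)}(z)=(z-a)\widetilde u_{1,j}^*R_j^*(\bar z)K_{1,j}^{-1}R_j(a)\widetilde u_{1,j}$, $\widetilde\gamma_2^{(2j+1)}(z)=-(z-a)v_j^*R_j^*(\bar z)K_{1,j}^{-1}R_j(a)v_j$, $\widetilde\delta_2^{(2j+1)}(z)=I_q+(z-a)v_j^*R_j^*(\bar z)K_{1,j}^{-1}R_j(a)\widetilde u_{1,j}$. *)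

(* Complex numbers are modelled by an arbitrary
   numClosedFieldType R (e.g. algC), with conjugation Num.conj. *)
From HB Require Import structures.
From mathcomp Require Import all_boot all_order all_algebra.
Set Implicit Arguments. Unset Strict Implicit. Unset Printing Implicit Defensive.
Import Order.TTheory GRing.Theory Num.Theory.
Local Open Scope ring_scope.

Section Defs.
Variable R : numClosedFieldType.

Definition mxH m p (A : 'M[R]_(m, p)) : 'M[R]_(p, m) := (map_mx Num.conj A)^T.

Definition hermmx m (A : 'M[R]_m) : Prop := mxH A = A.

Definition posdefmx m (A : 'M[R]_m) : Prop :=
  forall v : 'cV[R]_m, v != 0 -> 0 < (mxH v *m A *m v) 0 0.

Lemma blk_mod_lt m q (r : 'I_(m * q)) : (r %% q < q)%N.
Proof.
case: q r => [|q] r; last by rewrite ltn_mod.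
have : (r < m * 0)%N := ltn_ord r.
move: (nat_of_ord r) => x; by rewrite muln0 ltn0.
Qed.

Definition modord m q (r : 'I_(m * q)) : 'I_q := Ordinal (blk_mod_lt r).

Definition blockmx m q (B : nat -> nat -> 'M[R]_q) : 'M[R]_(m * q) :=
  \matrix_(r, c) B (r %/ q)%N (c %/ q)%N (modord r) (modord c).

Definition bcol m q (v : nat -> 'M[R]_q) : 'M[R]_(m * q, q) :=
  \matrix_(r, c) v (r %/ q)%N (modord r) c.

Variables (q : nat) (b : R) (s : nat -> 'M[R]_q).

(* K_{1,j} is the (j+1)x(j+1) block matrix; Kmx m = K_{1,m-1} *)
Definition Kmx m : 'M[R]_(m * q) :=
  blockmx m (fun l k => b *: s (l + k)%N - s (l + k).+1).
Definition K1 j := Kmx j.+1.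

Definition Tmx j : 'M[R]_(j.+1 * q) :=
  blockmx j.+1 (fun l k => if l == k.+1 then 1%:M else 0).

Definition Rmx j (z : R) : 'M[R]_(j.+1 * q) := invmx (1%:M - z *: Tmx j).

Definition vmx j : 'M[R]_(j.+1 * q, q) :=
  bcol j.+1 (fun l => if l == 0%N then 1%:M else 0).

Definition umx j : 'M[R]_(j.+1 * q, q) :=
  bcol j.+1 (fun l => if l == 0%N then s 0 else s l - b *: s l.-1).

Definition Ymx j : 'M[R]_(j * q, q) :=
  bcol j (fun l => b *: s (j + l)%N - s (j + l).+1).

(* Khat_{1,j}; for j = 0 the correction term is an empty product (= 0) *)
Definition Khat j : 'M[R]_q :=
  if j is 0%N then b *: s 0 - s 1
  else b *: s (2 * j)%N - s (2 * j).+1 - mxH (Ymx j) *m invmx (Kmx j) *m Ymx j.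

Definition rowmx j : 'M[R]_(q, j.+1 * q) :=
  castmx (erefl q, esym (mulSnr j q))
    (row_mx (- (mxH (Ymx j) *m invmx (Kmx j))) 1%:M).

Definition Gamma j (z : R) : 'M[R]_q :=
  if j is 0%N then 1%:M else rowmx j *m Rmx j z *m vmx j.
Definition Theta j (z : R) : 'M[R]_q :=
  if j is 0%N then s 0 else rowmx j *m Rmx j z *m umx j.

Variable a : R.

Definition starc (F : R -> 'M[R]_q) (z : R) : 'M[R]_q := mxH (F (Num.conj z)).

(* the blocks of Utilde_2^{(2j+1)} *)
Definition alpha2 j (z : R) : 'M[R]_q :=
  1%:M - (z - a) *: (mxH (umx j) *m mxH (Rmx j (Num.conj z)) *m invmx (K1 j)
                      *m Rmx j a *m vmx j).
Definition beta2 j (z : R) : 'M[R]_q :=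
  (z - a) *: (mxH (umx j) *m mxH (Rmx j (Num.conj z)) *m invmx (K1 j)
               *m Rmx j a *m umx j).
Definition gamma2 j (z : R) : 'M[R]_q :=
  - ((z - a) *: (mxH (vmx j) *m mxH (Rmx j (Num.conj z)) *m invmx (K1 j)
                  *m Rmx j a *m vmx j)).
Definition delta2 j (z : R) : 'M[R]_q :=
  1%:M + (z - a) *: (mxH (vmx j) *m mxH (Rmx j (Num.conj z)) *m invmx (K1 j)
                      *m Rmx j a *m umx j).

End Defs.

From HB Require Import structures.
From mathcomp Require Import all_boot all_order all_algebra zify.
Set Implicit Arguments. Unset Strict Implicit. Unset Printing Implicit Defensive.
Import Order.TTheory GRing.Theory Num.Theory.
Local Open Scope ring_scope.

(* K_{1,j} is the 2x2 block matrix [K_{1,j-1}, Y; Y^*, D] with Y = Ytilde_{1,j} and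
   D = b s_{2j} - s_{2j+1}, so by the Schur complement formula
   K_{1,j}^{-1} = diag(K_{1,j-1}^{-1}, 0) + r^* Khat_{1,j}^{-1} r with r = (-Y^* K_{1,j-1}^{-1}, I_q).
   R_j(z) is block lower triangular with R_{j-1}(z) in its upper left corner, and u_{1,j}, v_j
   extend u_{1,j-1}, v_{j-1}; hence the upper parts of R_j(z) u_{1,j} and R_j(z) v_j are
   R_{j-1}(z) u_{1,j-1} and R_{j-1}(z) v_{j-1}.  So each form X^* R_j^*(w) K_{1,j}^{-1} R_j(a) W
   defining a block of Utilde_2^{(2j+1)} is the same form at level j-1 plus
   (r R_j(w) X)^* Khat_{1,j}^{-1} (r R_j(a) W), where r R_j u_{1,j} = Theta_{1,j} and
   r R_j v_j = Gamma_{1,j}. *)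

Section ConjugateTranspose.
Variable R : numClosedFieldType.
Implicit Types m p r : nat.

Lemma mxHE m p (A : 'M[R]_(m, p)) i j : mxH A i j = Num.conj (A j i).
Proof. by rewrite /mxH !mxE. Qed.

Lemma mxHM m p r (A : 'M[R]_(m, p)) (B : 'M[R]_(p, r)) :
  mxH (A *m B) = mxH B *m mxH A.
Proof. by rewrite /mxH map_mxM trmx_mul. Qed.

Lemma mxHK m p (A : 'M[R]_(m, p)) : mxH (mxH A) = A.
Proof. by apply/matrixP=> i j; rewrite !mxHE conjCK. Qed.

Lemma mxHN m p (A : 'M[R]_(m, p)) : mxH (- A) = - mxH A.
Proof. by apply/matrixP=> i j; rewrite !mxE rmorphN. Qed.

Lemma mxH0 m p : mxH (0 : 'M[R]_(m, p)) = 0.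
Proof. by apply/matrixP=> i j; rewrite !mxE rmorph0. Qed.

Lemma mxH1 m : mxH (1%:M : 'M[R]_m) = 1%:M.
Proof. by rewrite /mxH map_mx1 trmx1. Qed.

Lemma mxHV m (A : 'M[R]_m) : mxH (invmx A) = invmx (mxH A).
Proof. by rewrite /mxH map_invmx trmx_inv. Qed.

Lemma mxH_row_mx m p1 p2 (A : 'M[R]_(m, p1)) (B : 'M[R]_(m, p2)) :
  mxH (row_mx A B) = col_mx (mxH A) (mxH B).
Proof. by rewrite /mxH map_row_mx tr_row_mx. Qed.

Lemma mxH_col_mx m p1 p2 (A : 'M[R]_(p1, m)) (B : 'M[R]_(p2, m)) :
  mxH (col_mx A B) = row_mx (mxH A) (mxH B).
Proof. by rewrite /mxH map_col_mx tr_col_mx. Qed.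

Lemma hermmx_conj m (S : 'M[R]_m) i k : hermmx S -> Num.conj (S i k) = S k i.
Proof. by move=> /matrixP /(_ k i); rewrite mxHE. Qed.

End ConjugateTranspose.

Section Casts.
Variable R : numClosedFieldType.
Variables (N' N : nat) (e : N' = N).

Lemma castmx_mul m r (A : 'M[R]_(m, N')) (B : 'M[R]_(N', r)) :
  A *m B = castmx (erefl, e) A *m castmx (e, erefl) B.
Proof. by case: N / e; rewrite !castmx_id. Qed.

Lemma castmx_mul3 m r (A : 'M[R]_(m, N')) (B : 'M[R]_N') (C : 'M[R]_(N', r)) :
  A *m B *m C = castmx (erefl, e) A *m castmx (e, e) B *m castmx (e, erefl) C.
Proof. by case: N / e; rewrite !castmx_id. Qed.

Lemma castmx_mull r (A : 'M[R]_N') (B : 'M[R]_(N', r)) :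
  castmx (e, erefl) (A *m B) = castmx (e, e) A *m castmx (e, erefl) B.
Proof. by case: N / e; rewrite !castmx_id. Qed.

Lemma castmx_mxH m (A : 'M[R]_(N', m)) :
  castmx (erefl, e) (mxH A) = mxH (castmx (e, erefl) A).
Proof. by case: N / e; rewrite !castmx_id. Qed.

Lemma castmx_invmx (A : 'M[R]_N') : castmx (e, e) (invmx A) = invmx (castmx (e, e) A).
Proof. by case: N / e; rewrite !castmx_id. Qed.

Lemma unitmx_castmx (A : 'M[R]_N') : (castmx (e, e) A \in unitmx) = (A \in unitmx).
Proof. by case: N / e; rewrite !castmx_id. Qed.

Lemma castmx_subZ1 z (A : 'M[R]_N') :
  castmx (e, e) (1%:M - z *: A) = 1%:M - z *: castmx (e, e) A.
Proof. by case: N / e; rewrite !castmx_id. Qed.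

Lemma castmx_castV m (A : 'M[R]_(m, N)) : castmx (erefl, e) (castmx (erefl, esym e) A) = A.
Proof. by case: N / e A => A; rewrite !castmx_id. Qed.

Lemma posdefmx_castmx (M : 'M[R]_N') : posdefmx M -> posdefmx (castmx (e, e) M).
Proof. by case: N / e; rewrite castmx_id. Qed.

End Casts.

Section SchurComplement.
Variable R : numClosedFieldType.
Variables (N m : nat) (A : 'M[R]_N) (Y : 'M[R]_(N, m)) (D : 'M[R]_m).
Hypothesis unitA : A \in unitmx.

Lemma unitmx_schur : block_mx A Y (mxH Y) D \in unitmx ->
  D - mxH Y *m invmx A *m Y \in unitmx.
Proof.
have -> : block_mx A Y (mxH Y) D =
    block_mx 1%:M 0 (mxH Y *m invmx A) 1%:M *m block_mx A Y 0 (D - mxH Y *m invmx A *m Y).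
  rewrite mulmx_block !mul1mx !mul0mx ?mulmx0 !addr0 ?add0r (mulmxKV unitA).
  by rewrite addrC subrK.
rewrite !unitmxE det_mulmx det_lblock det_ublock !det1 !mul1r unitrM.
by case/andP.
Qed.

Lemma invmx_block_schur : mxH (invmx A) = invmx A ->
  D - mxH Y *m invmx A *m Y \in unitmx ->
  invmx (block_mx A Y (mxH Y) D) =
  block_mx (invmx A) 0 0 0 +
  mxH (row_mx (- (mxH Y *m invmx A)) 1%:M) *m invmx (D - mxH Y *m invmx A *m Y)
     *m row_mx (- (mxH Y *m invmx A)) 1%:M.
Proof.
move=> hermAV unitH.
set H := D - _ in unitH *; set r := row_mx _ _.
have rH : mxH r = col_mx (- (invmx A *m Y)) 1%:M.
  by rewrite /r mxH_row_mx mxHN mxHM hermAV mxHK mxH1.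
have rinv : block_mx A Y (mxH Y) D *m (block_mx (invmx A) 0 0 0 + mxH r *m invmx H *m r)
    = 1%:M.
  rewrite mulmxDr rH !mulmxA mulmx_block mul_block_col !mulmx0 !addr0 (mulmxV unitA).
  rewrite !mulmxN mulmxA (mulmxV unitA) mul1mx mulmx1 addNr mulmx1 mulmxA.
  rewrite !mul_col_mx !mul0mx (addrC (- _) D) -/H (mulmxV unitH) mul1mx.
  have -> : col_mx (0 : 'M[R]_(N, N + m)) r = block_mx 0 0 (- (mxH Y *m invmx A)) 1%:M.
    by rewrite block_mxEv row_mx0.
  by rewrite add_block_mx !addr0 addrN add0r -scalar_mx_block.
have [unitK _] := mulmx1_unit rinv.
by rewrite -[LHS]mulmx1 -rinv mulKmx.
Qed.

End SchurComplement.

Section PositiveDefinite.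
Variable R : numClosedFieldType.

Lemma posdefmx_ulsub N m (A : 'M[R]_N) (B : 'M[R]_(N, m)) C D :
  posdefmx (block_mx A B C D) -> posdefmx A.
Proof.
move=> posK v v0.
have := posK (col_mx v 0); rewrite col_mx_eq0 (negbTE v0) => /(_ isT).
by rewrite mxH_col_mx mxH0 mul_row_block !mul0mx !addr0 mul_row_col mulmx0 addr0.
Qed.

Lemma posdefmx_unit N (M : 'M[R]_N) : posdefmx M -> M \in unitmx.
Proof.
move=> posM; apply/negPn/negP => nunitM.
have : kermx M^T != 0 by rewrite kermx_eq0 row_free_unit unitmx_tr.
case/rowV0Pn => v /sub_kermxP vM v0.
have := posM v^T; rewrite trmx_eq0 v0 => /(_ isT).
have Mv : M *m v^T = 0 by rewrite -[M]trmxK -trmx_mul vM trmx0.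
by rewrite -mulmxA Mv mulmx0 mxE ltxx.
Qed.

End PositiveDefinite.

Section BlockIndexing.
Variable R : numClosedFieldType.
Variable q : nat.

Definition brow m (w : nat -> 'M[R]_q) : 'M[R]_(q, m * q) :=
  \matrix_(r, c) w (c %/ q)%N r (modord c).

Lemma block_div_lt m (r : 'I_(m * q)) : (r %/ q < m)%N.
Proof.
have q_gt0 : (0 < q)%N.
  case: q r => // r; have := ltn_ord r; move: (nat_of_ord r) => x.
  by rewrite muln0 ltn0.
by rewrite ltn_divLR.
Qed.

Lemma modord_lshift m (i : 'I_(m * q)) :
  modord (cast_ord (esym (mulSnr m q)) (lshift q i)) = modord i.
Proof. exact/val_inj. Qed.

Lemma modord_rshift m (i : 'I_q) :
  modord (cast_ord (esym (mulSnr m q)) (rshift (m * q) i)) = i.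
Proof. by apply/val_inj; rewrite /= modnMDl modn_small. Qed.

Lemma div_rshift m (i : 'I_q) :
  ((nat_of_ord (cast_ord (esym (mulSnr m q)) (rshift (m * q) i))) %/ q = m)%N.
Proof.
have q_gt0 : (0 < q)%N by apply: leq_ltn_trans (ltn_ord i).
by rewrite /= divnMDl // divn_small // addn0.
Qed.

Lemma castmx_blockmxS m (B : nat -> nat -> 'M[R]_q) :
  castmx (mulSnr m q, mulSnr m q) (blockmx m.+1 B) =
  block_mx (blockmx m B) (bcol m (fun l => B l m)) (brow m (fun k => B m k)) (B m m).
Proof.
apply/matrixP=> i k; rewrite castmxE.
case: (splitP i) => i' Hi;
  [have -> : i = lshift _ i' by apply/val_inj | have -> : i = rshift _ i' by apply/val_inj];
case: (splitP k) => k' Hk;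
  (try have -> : k = lshift _ k' by apply/val_inj);
  (try have -> : k = rshift _ k' by apply/val_inj);
  rewrite ?block_mxEul ?block_mxEur ?block_mxEdl ?block_mxEdr !mxE
    ?modord_lshift ?modord_rshift ?div_rshift //.
Qed.

Lemma castmx_bcolS m (v : nat -> 'M[R]_q) :
  castmx (mulSnr m q, erefl q) (bcol m.+1 v) = col_mx (bcol m v) (v m).
Proof.
apply/matrixP=> i k; rewrite castmxE.
case: (splitP i) => i' Hi;
  [have -> : i = lshift _ i' by apply/val_inj | have -> : i = rshift _ i' by apply/val_inj];
  rewrite ?col_mxEu ?col_mxEd !mxE ?modord_lshift ?modord_rshift ?div_rshift //.
all: by rewrite /= cast_ord_id.
Qed.

End BlockIndexing.

Section ShiftResolvent.
Variable R : numClosedFieldType.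
Variable q : nat.

Lemma castmx_subZTmxS j z :
  castmx (mulSnr j.+1 q, mulSnr j.+1 q) (1%:M - z *: @Tmx R q j.+1) =
  block_mx (1%:M - z *: @Tmx R q j) 0
     (- (z *: brow j.+1 (fun k => if j.+1 == k.+1 then (1%:M : 'M[R]_q) else 0))) 1%:M.
Proof.
rewrite castmx_subZ1 /Tmx castmx_blockmxS scale_block_mx scalar_mx_block.
rewrite opp_block_mx add_block_mx.
rewrite eqn_leq ltnn andbF scaler0 ?subr0 ?oppr0 ?addr0 ?add0r -?/(@Tmx R q j).
congr block_mx.
apply/matrixP=> r c; rewrite !mxE.
have := block_div_lt r.
by case: eqP => [|_]; [lia | rewrite ?mxE mulr0 oppr0].
Qed.

Lemma unitmx_subZTmx j z : 1%:M - z *: @Tmx R q j \in unitmx.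
Proof.
elim: j => [|j IHj].
  have -> : @Tmx R q 0 = 0.
    apply/matrixP=> r c; rewrite !mxE; have := block_div_lt r; have := block_div_lt c.
    by case: eqP => [|_]; [lia | rewrite mxE].
  by rewrite scaler0 subr0 unitmx1.
rewrite -(unitmx_castmx (mulSnr j.+1 q)) castmx_subZTmxS unitmxE det_lblock det1 mulr1.
by rewrite -unitmxE.
Qed.

Lemma castmx_RmxS j z : exists C E,
  castmx (mulSnr j.+1 q, mulSnr j.+1 q) (@Rmx R q j.+1 z) = block_mx (@Rmx R q j z) 0 C E.
Proof.
pose L := - (z *: brow j.+1 (fun k => if j.+1 == k.+1 then (1%:M : 'M[R]_q) else 0)).
pose A := 1%:M - z *: @Tmx R q j.
exists (- (L *m invmx A)), 1%:M.
rewrite /Rmx castmx_invmx castmx_subZTmxS -/A -/L.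
have unitA : A \in unitmx := unitmx_subZTmx j z.
have Linv : block_mx A 0 L 1%:M *m block_mx (invmx A) 0 (- (L *m invmx A)) 1%:M = 1%:M.
  rewrite mulmx_block !mulmx0 !mul0mx !mulmx1 !mul1mx !addr0 add0r mulmxV //.
  by rewrite addrN -scalar_mx_block.
have [unitL _] := mulmx1_unit Linv.
by rewrite -[LHS]mulmx1 -Linv mulKmx.
Qed.

Lemma Rmx_mul_colS j z (X : 'M[R]_(j.+2 * q, q)) X1 x :
  castmx (mulSnr j.+1 q, erefl q) X = col_mx X1 x ->
  exists y, castmx (mulSnr j.+1 q, erefl q) (@Rmx R q j.+1 z *m X) =
            col_mx (@Rmx R q j z *m X1) y.
Proof.
move=> castX; have [C [E castR]] := castmx_RmxS j z.
by rewrite castmx_mull castR castX mul_block_col mul0mx addr0; eexists.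
Qed.

Lemma castmx_vmxS j : castmx (mulSnr j.+1 q, erefl q) (@vmx R q j.+1) = col_mx (@vmx R q j) 0.
Proof. exact: castmx_bcolS. Qed.

End ShiftResolvent.

Section KernelMatrix.
Variable R : numClosedFieldType.
Variables (q : nat) (b : R) (s : nat -> 'M[R]_q).
Hypothesis b_real : Num.conj b = b.

Lemma castmx_umxS j : castmx (mulSnr j.+1 q, erefl q) (umx b s j.+1) =
  col_mx (umx b s j) (s j.+1 - b *: s j).
Proof. exact: castmx_bcolS. Qed.

Lemma hermmx_Kmx m : (forall k, (k < 2 * m)%N -> hermmx (s k)) -> hermmx (Kmx b s m).
Proof.
move=> herm_s; apply/matrixP=> r c; rewrite mxHE !mxE rmorphB rmorphM /= b_real.
have := block_div_lt r; have := block_div_lt c => c_lt r_lt.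
rewrite !hermmx_conj ?(addnC (r %/ q)%N) //; apply: herm_s; lia.
Qed.

Lemma castmx_K1 j : (forall k, (k <= 2 * j)%N -> hermmx (s k)) ->
  castmx (mulSnr j q, mulSnr j q) (K1 b s j) =
  block_mx (Kmx b s j) (Ymx b s j) (mxH (Ymx b s j)) (b *: s (2 * j)%N - s (2 * j).+1).
Proof.
move=> herm_s; rewrite /K1 /Kmx castmx_blockmxS -/(Kmx b s j) addnn -mul2n.
congr block_mx.
  by apply/matrixP=> r c; rewrite !mxE addnC.
apply/matrixP=> r c; rewrite mxHE !mxE rmorphB rmorphM /= b_real.
have := block_div_lt c => c_lt.
rewrite !hermmx_conj ?(addnC j) //; apply: herm_s; lia.
Qed.

Lemma posdefmx_Kmx_leq m p : (m <= p)%N -> posdefmx (Kmx b s p) -> posdefmx (Kmx b s m).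
Proof.
move=> /subnKC <-; elim: (p - m)%N => [|k IHk]; first by rewrite addn0.
rewrite addnS => /(posdefmx_castmx (mulSnr (m + k) q)).
by rewrite /Kmx castmx_blockmxS => /posdefmx_ulsub.
Qed.

Variable a : R.

Lemma Uform_recursion j w :
  (forall k, (k <= 2 * j.+1)%N -> hermmx (s k)) -> posdefmx (K1 b s j.+1) ->
  forall (X W : 'M[R]_(j.+2 * q, q)) X1 x W1 x',
  castmx (mulSnr j.+1 q, erefl q) X = col_mx X1 x ->
  castmx (mulSnr j.+1 q, erefl q) W = col_mx W1 x' ->
  mxH X *m mxH (@Rmx R q j.+1 w) *m invmx (K1 b s j.+1) *m @Rmx R q j.+1 a *m W =
  mxH X1 *m mxH (@Rmx R q j w) *m invmx (K1 b s j) *m @Rmx R q j a *m W1 +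
  mxH (rowmx b s j.+1 *m @Rmx R q j.+1 w *m X) *m invmx (Khat b s j.+1)
     *m (rowmx b s j.+1 *m @Rmx R q j.+1 a *m W).
Proof.
move=> herm_s posK X W X1 x W1 x' castX castW.
have [y castRX] := Rmx_mul_colS w castX; have [y' castRW] := Rmx_mul_colS a castW.
have posA : posdefmx (Kmx b s j.+1) by apply: posdefmx_Kmx_leq posK.
have unitA := posdefmx_unit posA.
have hermAV : mxH (invmx (Kmx b s j.+1)) = invmx (Kmx b s j.+1).
  by rewrite mxHV hermmx_Kmx // => k k_lt; apply: herm_s; lia.
have unitK := posdefmx_unit (posdefmx_castmx (mulSnr j.+1 q) posK).
rewrite castmx_K1 // in unitK.
have unitH := unitmx_schur unitA unitK.
have regroup N (M : 'M[R]_(N, q)) B P C (V : 'M[R]_(N, q)) :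
    mxH M *m mxH B *m P *m C *m V = mxH (B *m M) *m P *m (C *m V).
  by rewrite mxHM !mulmxA.
rewrite !regroup (castmx_mul3 (mulSnr j.+1 q)) castmx_mxH castRX castRW castmx_invmx.
rewrite castmx_K1 // invmx_block_schur //.
rewrite -!(mulmxA (rowmx _ _ _)) !(castmx_mul (mulSnr j.+1 q) (rowmx _ _ _)).
rewrite castRX castRW castmx_castV mulmxDr mulmxDl; congr (_ + _).
  rewrite mxH_col_mx mul_row_block !mulmx0 !addr0 mul_row_col mul0mx addr0.
  by rewrite !mulmxA.
by rewrite mxHM !mulmxA.
Qed.

End KernelMatrix.

(* [a] only enters as an evaluation point. *)
Theorem mainTheorem2 (R : numClosedFieldType) (q n : nat) (a b : R)
  (s : nat -> 'M[R]_q)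
  (ha : a \is Num.real) (hb : b \is Num.real) (hab : a < b)
  (hherm : forall k, (k <= (2 * n).+1)%N -> hermmx (s k))
  (hpos : posdefmx (K1 b s n)) :
  forall j : nat, (1 <= j <= n)%N -> forall z : R,
    [/\ alpha2 b s a j z = alpha2 b s a j.-1 z
          - (z - a) *: (starc (Theta b s j) z *m invmx (Khat b s j) *m Gamma b s j a),
        beta2 b s a j z = beta2 b s a j.-1 z
          + (z - a) *: (starc (Theta b s j) z *m invmx (Khat b s j) *m Theta b s j a),
        gamma2 b s a j z = gamma2 b s a j.-1 z
          - (z - a) *: (starc (Gamma b s j) z *m invmx (Khat b s j) *m Gamma b s j a)
      & delta2 b s a j z = delta2 b s a j.-1 z
          + (z - a) *: (starc (Gamma b s j) z *m invmx (Khat b s j) *m Theta b s j a)].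
Proof.
case=> [|j] // /andP[_ j_lt_n] z.
have herm_s k : (k <= 2 * j.+1)%N -> hermmx (s k) by move=> k_le; apply: hherm; lia.
have posK : posdefmx (K1 b s j.+1) by apply: posdefmx_Kmx_leq hpos.
have recU := Uform_recursion (conj_Creal hb) a (Num.conj z) herm_s posK.
have castu := castmx_umxS b s j; have castv := @castmx_vmxS R q j.
rewrite /alpha2 /beta2 /gamma2 /delta2 /starc /Theta /Gamma.
rewrite (recU _ _ _ _ _ _ castu castv) (recU _ _ _ _ _ _ castu castu).
rewrite (recU _ _ _ _ _ _ castv castv) (recU _ _ _ _ _ _ castv castu).
by rewrite !scalerDr !opprD !addrA.
Qed.
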